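(* Let $d$ be a square-free positive integer such that $E=\mathbb{Q}(\sqrt{-d})$ has class number at least $4$, and let $\mathcal{O}$ be its ring of integers. Let $\mathfrak{P}$ be a non-principal prime ideal of $\mathcal{O}$ and let $p$ be the prime number lying below $\mathfrak{P}$. Suppose $p\mid d$. Then for every positive integer $r\geq (p-1)d/p$, the unary Hermitian lattice $\mathfrak{P}v$, where $v$ spans a one-dimensional Hermitian space over $E$ with $h(v)=r/p$, is represented by $I_4$.
   Context: A Hermitian space is a finite-dimensional $E$-vector space with a map $h$ that is $E$-linear in the first argument and satisfies $h(v,w)=\overline{h(w,v)}$; $h(v):=h(v,v)$. $I_4$ is the Hermitian lattice $\mathcal{O}^4$ with $h(x,y)=\sum_{i=1}^4 x_i\overline{y_i}$. A lattice $L$ is represented by $I_4$ if there is an injective $\mathcal{O}$-linear map $L\to I_4$ preserving $h$. *)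

From HB Require Import structures.
From mathcomp Require Import all_boot all_order all_algebra all_field.
Set Implicit Arguments. Unset Strict Implicit. Unset Printing Implicit Defensive.
Import Order.TTheory GRing.Theory Num.Theory.
Local Open Scope ring_scope.

(* We work inside algC (algebraic complex numbers); complex conjugation x^*
   restricts to the nontrivial automorphism of E = Q(sqrt(-d)). *)

Definition squarefree (d : nat) : Prop :=
  forall q : nat, prime q -> ~~ (q * q %| d)%N.

Definition sqrt_md (d : nat) : algC := sqrtC (- (d%:R)).

Definition inE (d : nat) (x : algC) : Prop :=
  exists a b : rat, x = ratr a + ratr b * sqrt_md d.

Definition inO (d : nat) (x : algC) : Prop := inE d x /\ x \in Aint.

Definition ideal (d : nat) (I : algC -> Prop) : Prop :=
  [/\ forall x, I x -> inO d x,
      I 0,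
      forall x y, I x -> I y -> I (x + y)
    & forall a x, inO d a -> I x -> I (a * x)].

Definition nonzero_set (I : algC -> Prop) : Prop := exists x, I x /\ x != 0.

Definition scale_set (a : algC) (I : algC -> Prop) : algC -> Prop :=
  fun z => exists x, I x /\ z = a * x.

Definition ideal_equiv (d : nat) (I J : algC -> Prop) : Prop :=
  exists a b : algC, [/\ inO d a, inO d b, a != 0, b != 0 &
    forall z, scale_set a I z <-> scale_set b J z].

(* the class number of E is at least n: there are n pairwise inequivalent
   nonzero integral ideals (every ideal class has an integral representative) *)
Definition class_number_ge (d n : nat) : Prop :=
  exists Is : 'I_n -> (algC -> Prop),
    (forall i, ideal d (Is i) /\ nonzero_set (Is i)) /\
    (forall i j, i != j -> ~ ideal_equiv d (Is i) (Is j)).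

Definition prime_ideal (d : nat) (P : algC -> Prop) : Prop :=
  [/\ ideal d P, nonzero_set P, ~ P 1
    & forall a b, inO d a -> inO d b -> P (a * b) -> P a \/ P b].

Definition principal_ideal (d : nat) (P : algC -> Prop) : Prop :=
  exists a, inO d a /\ forall z, P z <-> scale_set a (inO d) z.

(* The unary Hermitian lattice P v with h(v) = c is represented by I_4:
   an injective O-linear map f : P v -> O^4 preserving h, written on the
   coefficient x of x v (x in P); h(x v, y v) = x * y^* * c. *)
Definition represented_by_I4 (d : nat) (P : algC -> Prop) (c : algC) : Prop :=
  exists f : algC -> 'I_4 -> algC,
    [/\ forall x, P x -> forall i, inO d (f x i),
        forall a b x y, inO d a -> inO d b -> P x -> P y ->
          forall i, f (a * x + b * y) i = a * f x i + b * f y i,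
        forall x y, P x -> P y -> (forall i, f x i = f y i) -> x = y
      & forall x y, P x -> P y ->
          \sum_(i < 4) f x i * (f y i)^* = x * (y^*) * c].

(* Write d = m p; as d is square-free, p and m are coprime, and (p - 1) d <= p r
   reads (p - 1) m <= r, so r = p A + m B with A, B >= 0.  By Lagrange's theorem
   A = sum a_i^2 and B = sum b_i^2, and the four numbers w_i = a_i + b_i sqrt(-d) / p
   satisfy sum |w_i|^2 = A + B m / p = r / p.  The map x |-> (x w_i)_i sends P into
   O^4: for x in P, the number x sqrt(-d) / p has rational trace and norm lying in
   P /\ Z = p Z (because sqrt(-d) lies in P, its square -d being in P), so it is an
   algebraic integer. *)

From Pilot Require Import Defs.
From HB Require Import structures.
From mathcomp Require Import all_boot all_order all_algebra all_field.
From mathcomp Require Import zify ring.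
Set Implicit Arguments. Unset Strict Implicit. Unset Printing Implicit Defensive.
Import Order.TTheory GRing.Theory Num.Theory.
Local Open Scope ring_scope.

(** * Lagrange's four-square theorem *)

Lemma Fp_natr_sqr_inj (p h x y : nat) : prime p -> (h.*2 < p)%N ->
  (x <= h)%N -> (y <= h)%N -> x%:R ^+ 2 = y%:R ^+ 2 :> 'F_p -> x = y.
Proof.
move=> pp hp xh yh /eqP; rewrite -subr_eq0 subr_sqr mulf_eq0 subr_eq0 -natrD.
case/orP=> /eqP/(congr1 val); rewrite /= !val_Fp_nat ?modn_small //=; lia.
Qed.

Lemma exists_sqr_sum_add1_dvd (p : nat) : prime p -> odd p ->
  exists x y : nat, [/\ (x <= p./2)%N, (y <= p./2)%N & (p %| x ^ 2 + y ^ 2 + 1)%N].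
Proof.
move=> pp p_odd; set h := p./2.
have ph : p = h.*2.+1 by rewrite /h -{1}(odd_double_half p) p_odd.
pose F (u : 'I_h.+1 + 'I_h.+1) : 'F_p :=
  match u with inl x => (x : nat)%:R ^+ 2 | inr y => - 1 - (y : nat)%:R ^+ 2 end.
have /injectivePn [u [v uv Fuv]] : ~~ injectiveb F.
  apply/injectiveP => /leq_card; rewrite card_sum !card_ord Fp_cast //; lia.
have sum_dvd (x y : 'I_h.+1) : F (inl x) = F (inr y) ->
    exists x y : nat, [/\ (x <= h)%N, (y <= h)%N & (p %| x ^ 2 + y ^ 2 + 1)%N].
  move=> /= E; exists x, y; split; [exact: ltn_ord x | exact: ltn_ord y |].
  by rewrite /dvdn -(val_Fp_nat pp) !natrD !natrX E subrK addNr.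
have inj (x y : 'I_h.+1) : (x : nat)%:R ^+ 2 = (y : nat)%:R ^+ 2 :> 'F_p -> x = y.
  move/(Fp_natr_sqr_inj (h := h) pp) => E; apply/val_inj/E; first lia.
    exact: ltn_ord x.
  exact: ltn_ord y.
case: u v uv Fuv => [x|y] [x'|y'] uv /=.
- by move/inj => E; rewrite E eqxx in uv.
- exact: sum_dvd.
- by move/esym/sum_dvd.
- by move/addrI/oppr_inj/inj => E; rewrite E eqxx in uv.
Qed.

Definition sum4sq (n : int) : Prop :=
  exists a b c e : int, n = a ^+ 2 + b ^+ 2 + c ^+ 2 + e ^+ 2.

Lemma euler_four_squares (R : comRingType) (a b c d e f g h : R) :
  (a ^+ 2 + b ^+ 2 + c ^+ 2 + d ^+ 2) * (e ^+ 2 + f ^+ 2 + g ^+ 2 + h ^+ 2) =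
  (a * e + b * f + c * g + d * h) ^+ 2 + (a * f - b * e + c * h - d * g) ^+ 2
  + (a * g - b * h - c * e + d * f) ^+ 2 + (a * h + b * g - c * f - d * e) ^+ 2.
Proof. ring. Qed.

Lemma sum4sqM m n : sum4sq m -> sum4sq n -> sum4sq (m * n).
Proof.
move=> [a [b [c [d ->]]]] [e [f [g [h ->]]]].
by rewrite euler_four_squares; do 4 eexists.
Qed.

(* If [y + M q] and [y] represent [M a] and [M b], Euler's identity makes all
   four squares of the product divisible by [M ^+ 2]. *)
Lemma sum4sq_descent (M a b y1 y2 y3 y4 q1 q2 q3 q4 : int) : M != 0 ->
  (y1 + M * q1) ^+ 2 + (y2 + M * q2) ^+ 2 + (y3 + M * q3) ^+ 2 + (y4 + M * q4) ^+ 2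
    = M * a ->
  y1 ^+ 2 + y2 ^+ 2 + y3 ^+ 2 + y4 ^+ 2 = M * b ->
  sum4sq (a * b).
Proof.
move=> M0 Ex Ey.
pose w1 := a - ((y1 + M * q1) * q1 + (y2 + M * q2) * q2
                + (y3 + M * q3) * q3 + (y4 + M * q4) * q4).
pose w2 := y2 * q1 - y1 * q2 + y4 * q3 - y3 * q4.
pose w3 := y3 * q1 - y1 * q3 + y2 * q4 - y4 * q2.
pose w4 := y4 * q1 - y1 * q4 + y3 * q2 - y2 * q3.
exists w1, w2, w3, w4; apply: (mulfI (mulf_neq0 M0 M0)).
have Mw1 : M * w1 = (y1 + M * q1) * y1 + (y2 + M * q2) * y2
                    + (y3 + M * q3) * y3 + (y4 + M * q4) * y4.
  by rewrite mulrBr -Ex; ring.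
have -> : M * M * (a * b) = (M * a) * (M * b) by ring.
have -> : M * M * (w1 ^+ 2 + w2 ^+ 2 + w3 ^+ 2 + w4 ^+ 2) =
  (M * w1) ^+ 2 + (M * w2) ^+ 2 + (M * w3) ^+ 2 + (M * w4) ^+ 2 by ring.
by rewrite -Ex -Ey euler_four_squares Mw1 /w2 /w3 /w4; ring.
Qed.

Lemma divz_centered (x m : int) : 0 < m ->
  exists q y : int, x = y + m * q /\ - m < 2 * y <= m.
Proof.
move=> m0; have := divz_eq x m; have := modz_ge0 x (lt0r_neq0 m0).
have := ltz_pmod x m0; set q := (x %/ m)%Z; set y := (x %% m)%Z => ym y0 xE.
have [le_ym | lt_my] := lerP (2 * y) m.
  by exists q, y; rewrite xE addrC mulrC; lia.
by exists (q + 1), (y - m); rewrite xE; split; [ring | lia].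
Qed.

Lemma prime_neq_mulz (p m : nat) (k : int) : prime p -> (1 < m < p)%N ->
  p%:Z != m%:Z * k.
Proof.
move=> pp /andP[m1 mp]; apply/eqP => pE.
have k0 : 0 <= k by nia.
move: pE; rewrite -[k]gez0_abs // -PoszM => /eqP; rewrite eqz_nat => /eqP pE.
have /(prime_nt_dvdP pp) : (m %| p)%N by rewrite pE dvdn_mulr.
lia.
Qed.

Lemma centered_sqr_le (M y : int) : - M < 2 * y <= M -> 4 * y ^+ 2 <= M ^+ 2.
Proof. by move=> c; nia. Qed.

Lemma centered_sqr_eq (M y : int) :
  - M < 2 * y <= M -> 4 * y ^+ 2 = M ^+ 2 -> 2 * y = M.
Proof. by move=> c e; nia. Qed.

Lemma sqr_sum4_le0 (a b c e : int) : a ^+ 2 + b ^+ 2 + c ^+ 2 + e ^+ 2 <= 0 ->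
  [/\ a = 0, b = 0, c = 0 & e = 0].
Proof.
have := (sqr_ge0 a, sqr_ge0 b, sqr_ge0 c, sqr_ge0 e) => -[[[a0 b0] c0] e0] le0.
by split; apply/eqP; rewrite -sqrf_eq0; lia.
Qed.

Lemma centered_sqr_sum4_ge (M a b c e : int) :
  - M < 2 * a <= M -> - M < 2 * b <= M -> - M < 2 * c <= M -> - M < 2 * e <= M ->
  M ^+ 2 <= a ^+ 2 + b ^+ 2 + c ^+ 2 + e ^+ 2 ->
  [/\ 2 * a = M, 2 * b = M, 2 * c = M & 2 * e = M].
Proof.
move=> ca cb cc ce ge.
have := (centered_sqr_le ca, centered_sqr_le cb, centered_sqr_le cc, centered_sqr_le ce).
by move=> [[[la lb] lc] le]; split; apply: centered_sqr_eq => //; lia.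
Qed.

Lemma sum4sq_prime_of_mul (p m : nat) : prime p -> (0 < m < p)%N ->
  sum4sq (m%:Z * p%:Z) -> sum4sq p%:Z.
Proof.
move=> pp; elim/ltn_ind: m => m IH /andP[m0 mp] [x1 [x2 [x3 [x4 Ex]]]].
have [m_eq1 | m_neq1] := eqVneq m 1%N.
  by rewrite m_eq1 mul1r in Ex; exists x1, x2, x3, x4.
have m1 : (1 < m < p)%N by rewrite mp andbT ltn_neqAle eq_sym m_neq1.
set M := m%:Z in Ex; have M0 : 0 < M by rewrite ltz_nat.
have [q1 [y1 [x1E c1]]] := divz_centered x1 M0.
have [q2 [y2 [x2E c2]]] := divz_centered x2 M0.
have [q3 [y3 [x3E c3]]] := divz_centered x3 M0.
have [q4 [y4 [x4E c4]]] := divz_centered x4 M0.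
subst x1 x2 x3 x4.
have [r Ey] : exists r, y1 ^+ 2 + y2 ^+ 2 + y3 ^+ 2 + y4 ^+ 2 = M * r.
  exists (p%:Z - 2 * (y1 * q1 + y2 * q2 + y3 * q3 + y4 * q4)
          - M * (q1 ^+ 2 + q2 ^+ 2 + q3 ^+ 2 + q4 ^+ 2)).
  by rewrite mulrBr mulrBr Ex; ring.
have r0 : 0 < r.
  rewrite ltNge; apply/negP => r_le0.
  have y_le0 : y1 ^+ 2 + y2 ^+ 2 + y3 ^+ 2 + y4 ^+ 2 <= 0 by rewrite Ey pmulr_rle0.
  have [y1_0 y2_0 y3_0 y4_0] := sqr_sum4_le0 y_le0.
  subst y1 y2 y3 y4.
  move/eqP: (prime_neq_mulz (q1 ^+ 2 + q2 ^+ 2 + q3 ^+ 2 + q4 ^+ 2) pp m1); apply.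
  by apply: (mulfI (lt0r_neq0 M0)); rewrite Ex; ring.
have rM : r < M.
  rewrite ltNge; apply/negP => M_le_r.
  have y_ge : M ^+ 2 <= y1 ^+ 2 + y2 ^+ 2 + y3 ^+ 2 + y4 ^+ 2.
    by rewrite Ey expr2 ler_pM2l.
  have [e1 e2 e3 e4] := centered_sqr_sum4_ge c1 c2 c3 c4 y_ge.
  move/eqP: (prime_neq_mulz
    (q1 ^+ 2 + q1 + q2 ^+ 2 + q2 + q3 ^+ 2 + q3 + q4 ^+ 2 + q4 + 1) pp m1); apply.
  apply: (mulfI (_ : 4 * M != 0)); first by rewrite mulf_neq0 // lt0r_neq0.
  have -> : 4 * M * p%:Z = (2 * y1 + 2 * M * q1) ^+ 2 + (2 * y2 + 2 * M * q2) ^+ 2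
      + (2 * y3 + 2 * M * q3) ^+ 2 + (2 * y4 + 2 * M * q4) ^+ 2.
    by rewrite -mulrA Ex; ring.
  by rewrite e1 e2 e3 e4; ring.
have [r' rE] : exists r' : nat, r = r'%:Z by exists `|r|%N; rewrite gez0_abs ?ltW.
apply: (IH r'); first by rewrite -ltz_nat -rE.
  by rewrite -!ltz_nat -rE r0 (lt_trans rM) // ltz_nat.
by rewrite -rE mulrC; apply: sum4sq_descent (lt0r_neq0 M0) (esym Ex) Ey.
Qed.

Lemma sum4sq_prime (p : nat) : prime p -> sum4sq p%:Z.
Proof.
move=> pp; have [-> | p_odd] := even_prime pp; first by exists 1, 1, 0, 0.
have [x [y [xh yh /dvdnP[k kE]]]] := exists_sqr_sum_add1_dvd pp p_odd.
set h := p./2 in xh yh; have ph : p = h.*2.+1 by rewrite -{1}(odd_double_half p) p_odd.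
have k_lt : (k * p < p * p)%N.
  rewrite -kE -!mulnn {1 2}ph -mul2n.
  by have := prime_gt1 pp; have := leq_mul xh xh; have := leq_mul yh yh; nia.
apply: (@sum4sq_prime_of_mul p k pp).
  rewrite ltn_pmul2r ?prime_gt0 // in k_lt; rewrite k_lt andbT lt0n.
  by apply/eqP => k0; move: kE; rewrite k0 addn1.
by exists x%:Z, y%:Z, 1, 0; rewrite -PoszM -kE; lia.
Qed.

Lemma sum4sq_nat (n : nat) : sum4sq n%:Z.
Proof.
elim/ltn_ind: n => n IH; have [n_le1 | n_gt1] := leqP n 1.
  by case: n n_le1 {IH} => [|[|//]] _; [exists 0, 0, 0, 0 | exists 1, 0, 0, 0].
rewrite -(divnK (pdiv_dvd n)) PoszM mulrC.
apply: sum4sqM; first exact/sum4sq_prime/pdiv_prime.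
by apply: IH; rewrite ltn_Pdiv ?prime_gt1 ?pdiv_prime // ltnW.
Qed.

Lemma nat_lin_comb_coprime (a b r : nat) : (0 < a)%N -> coprime a b ->
  ((a - 1) * b <= r)%N -> exists u v : nat, (a * u + b * v)%N = r.
Proof.
(* [V] is the residue of [r / b] modulo [a], hence [b V <= b (a - 1) <= r]. *)
move=> a0 co le_r; have [u [v uv']] := Bezoutz a b.
have uv : u * a%:Z + v * b%:Z = 1 by rewrite uv' /gcdz /= (eqP co).
have a0' : 0 < a%:Z by rewrite ltz_nat.
have := divz_eq (r%:Z * v) a%:Z; set q := (_ %/ _)%Z; set V := (_ %% _)%Z => rvE.
pose U := r%:Z * u + b%:Z * q.
have UV : a%:Z * U + b%:Z * V = r%:Z.
  have -> : V = r%:Z * v - q * a%:Z by rewrite rvE; ring.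
  by rewrite -[RHS]mulr1 -uv /U; ring.
have V_ge0 : 0 <= V := modz_ge0 _ (lt0r_neq0 a0').
have V_lt : V < a%:Z := ltz_pmod _ a0'.
have U_ge0 : 0 <= U.
  rewrite -(pmulr_rge0 _ a0') -[_ * U](addrK (b%:Z * V)) UV subr_ge0.
  apply: (@le_trans _ _ (b%:Z * (a%:Z - 1))); first by rewrite ler_wpM2l //; lia.
  have -> : a%:Z - 1 = (a - 1)%N by lia.
  by rewrite mulrC -PoszM lez_nat.
exists `|U|%N, `|V|%N; apply/eqP; rewrite -eqz_nat PoszD !PoszM !gez0_abs //.
exact/eqP.
Qed.

(** * The imaginary quadratic field and its ring of integers *)

Lemma sqrt_md_sqr (d : nat) : sqrt_md d ^+ 2 = - d%:R.
Proof. exact: sqrtCK. Qed.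

Lemma conj_sqrt_md (d : nat) : (sqrt_md d)^* = - sqrt_md d.
Proof.
set s := sqrt_md d; have [-> | s0] := eqVneq s 0; first by rewrite rmorph0 oppr0.
apply: (mulfI s0); rewrite -normCK -normrX sqrt_md_sqr normrN normr_nat.
by rewrite mulrN -expr2 sqrt_md_sqr opprK.
Qed.

Lemma Aint_trace_norm (y : algC) :
  y + y^* \in Num.int -> y * y^* \in Num.int -> y \in Aint.
Proof.
move=> tr_int n_int; apply: (@root_monic_Aint (('X - y%:P) * ('X - (y^*)%:P))).
- by rewrite rootM root_XsubC eqxx.
- by rewrite monicMl monicXsubC.
have -> : ('X - y%:P) * ('X - (y^*)%:P) = 'X^2 - (y + y^*)%:P * 'X + (y * y^*)%:P.
  by rewrite polyCD polyCM; ring.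
apply/polyOverP => i; rewrite coefD coefB coefXn coefMX !coefC.
by case: i => [|[|[|i]]] /=; rewrite ?subr0 ?sub0r ?add0r ?addr0 ?rpredN ?rpred0 ?rpred1.
Qed.

Section QuadraticField.
Variable d : nat.
Local Notation s := (sqrt_md d).

Lemma conj_inE (a b : rat) : (ratr a + ratr b * s)^* = ratr a - ratr b * s.
Proof.
have conj_rat (c : rat) : (ratr c : algC)^* = ratr c by apply/conj_Crat/Crat_rat.
(* [ratr] itself unfolds to a product, so [rmorphM] must target the outer one. *)
by rewrite rmorphD (rmorphM _ (ratr b)) /= !conj_rat conj_sqrt_md mulrN.
Qed.

Lemma inE_rat (a : rat) : Defs.inE d (ratr a).
Proof. by exists a, 0; rewrite rmorph0 mul0r addr0. Qed.

Lemma inE_sqrt : Defs.inE d s.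
Proof. by exists 0, 1; rewrite rmorph0 rmorph1 add0r mul1r. Qed.

Lemma inE_add x y : Defs.inE d x -> Defs.inE d y -> Defs.inE d (x + y).
Proof.
by move=> [a [b ->]] [a' [b' ->]]; exists (a + a'), (b + b'); rewrite !rmorphD; ring.
Qed.

Lemma inE_mul x y : Defs.inE d x -> Defs.inE d y -> Defs.inE d (x * y).
Proof.
move=> [a [b ->]] [a' [b' ->]]; exists (a * a' - d%:R * b * b'), (a * b' + b * a').
rewrite !(rmorphD, rmorphN, rmorphM) rmorph_nat -[d%:R]opprK -sqrt_md_sqr; ring.
Qed.

Lemma inE_trace x : Defs.inE d x -> x + x^* \in Crat.
Proof.
move=> [a [b ->]]; rewrite conj_inE addrACA subrr addr0 -mulr2n -rmorphMn.
exact: Crat_rat.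
Qed.

Lemma inE_norm x : Defs.inE d x -> x * x^* \in Crat.
Proof.
move=> [a [b ->]]; apply/CratP; exists (a ^+ 2 + d%:R * b ^+ 2).
rewrite conj_inE !(rmorphD, rmorphM, rmorphXn) rmorph_nat -[d%:R]opprK -sqrt_md_sqr.
ring.
Qed.

Lemma inO_add x y : inO d x -> inO d y -> inO d (x + y).
Proof. by move=> [Ex Ax] [Ey Ay]; split; [apply: inE_add | apply: rpredD]. Qed.

Lemma inO_mul x y : inO d x -> inO d y -> inO d (x * y).
Proof. by move=> [Ex Ax] [Ey Ay]; split; [apply: inE_mul | apply: rpredM]. Qed.

Lemma inO_int (k : int) : inO d k%:~R.
Proof. by split; [rewrite -ratr_int; apply: inE_rat | apply: Aint_int]. Qed.

Lemma inO_nat (k : nat) : inO d k%:R.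
Proof. exact: inO_int k. Qed.

Lemma inO_opp x : inO d x -> inO d (- x).
Proof. by move=> Ox; rewrite -mulN1r; apply: inO_mul (inO_int (-1)) Ox. Qed.

Lemma inO_sqrt : inO d s.
Proof.
split; first exact: inE_sqrt.
apply: Aint_trace_norm; rewrite conj_sqrt_md ?subrr ?rpred0 //.
by rewrite mulrN -expr2 sqrt_md_sqr opprK rpred_nat.
Qed.

Lemma inO_conj x : inO d x -> inO d x^*.
Proof.
move=> [[a [b ->]] Ax]; split; last by rewrite Aint_aut.
by exists a, (- b); rewrite conj_inE rmorphN mulNr.
Qed.

End QuadraticField.

(** * A prime ideal above a ramified prime *)

Section Ideal.
Variables (d : nat) (I : algC -> Prop).
Hypothesis I_ideal : ideal d I.

Lemma ideal_inO x : I x -> inO d x.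
Proof. by case: I_ideal => IO _ _ _; apply: IO. Qed.

Lemma idealD x y : I x -> I y -> I (x + y).
Proof. by case: I_ideal => _ _ ID _; apply: ID. Qed.

Lemma idealMl a x : inO d a -> I x -> I (a * x).
Proof. by case: I_ideal => _ _ _ IM; apply: IM. Qed.

Lemma idealN x : I x -> I (- x).
Proof. by move=> Ix; rewrite -mulN1r; apply: idealMl (inO_int d (-1)) Ix. Qed.

End Ideal.

Definition coord (d p : nat) (a b : int) : algC := a%:~R + b%:~R * sqrt_md d / p%:R.

Lemma coord_norm (d p : nat) (a b : int) :
  coord d p a b * (coord d p a b)^* = (a ^+ 2)%:~R + (b ^+ 2)%:~R * d%:R / p%:R ^+ 2.
Proof.
rewrite !rmorphD !rmorphM fmorphV !rmorph_int rmorph_nat /= conj_sqrt_md.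
by rewrite -[d%:R]opprK -sqrt_md_sqr -exprVn /coord; ring.
Qed.

Section RamifiedPrime.
Variables (d p : nat) (P : algC -> Prop).
Hypotheses (P_ideal : ideal d P) (P_neq1 : ~ P 1)
  (P_prime : forall a b, inO d a -> inO d b -> P (a * b) -> P a \/ P b)
  (p_prime : prime p) (P_p : P p%:R) (p_dvd_d : (p %| d)%N).
Local Notation s := (sqrt_md d).

Lemma ideal_nat_dvd (k : nat) : P k%:R -> (p %| k)%N.
Proof.
move=> P_k; apply: contraT => p_ndvd_k; case: P_neq1.
have [a _ /dvdnP[c cE]] := Bezoutl k (prime_gt0 p_prime).
move: cE; rewrite (eqP (_ : coprime p k)) ?prime_coprime // => cE.
have -> : 1 = c%:R * p%:R - a%:R * k%:R :> algC by rewrite -!natrM -cE natrD addrK.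
apply: (idealD P_ideal (idealMl P_ideal (inO_nat d c) P_p)).
exact: (idealN P_ideal (idealMl P_ideal (inO_nat d a) P_k)).
Qed.

Lemma ideal_int_dvd (z : int) : P z%:~R -> (p %| `|z|)%N.
Proof.
case: z => n P_n; apply: ideal_nat_dvd; first exact: P_n.
by rewrite -[_%:R]opprK; apply: idealN P_ideal _ _; rewrite NegzE mulrNz in P_n.
Qed.

Lemma ideal_rat_Aint_div w : P w -> w \in Crat -> w \in Aint -> w / p%:R \in Num.int.
Proof.
move=> P_w w_rat w_Aint; have /intrP[z zE] := Cint_rat_Aint w_rat w_Aint.
rewrite {}zE in P_w *; have /dvdzP[q ->] : (p%:Z %| z)%Z by exact: ideal_int_dvd.
by rewrite intrM mulfK ?rpred_int // pnatr_eq0 -lt0n prime_gt0.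
Qed.

Lemma ideal_sqrt_md : P s.
Proof.
have [k dE] := dvdnP p_dvd_d.
have P_ss : P (s * s).
  rewrite -expr2 sqrt_md_sqr dE natrM -mulNr.
  exact: (idealMl P_ideal (inO_opp (inO_nat d k)) P_p).
by have [] := P_prime (inO_sqrt d) (inO_sqrt d) P_ss.
Qed.

Lemma ideal_mul_sqrt_md_div x : P x -> inO d (x * s / p%:R).
Proof.
move=> P_x; have O_x := ideal_inO P_ideal P_x.
have p0 : p%:R != 0 :> algC by rewrite pnatr_eq0 -lt0n prime_gt0.
have [k dE] := dvdnP p_dvd_d.
set y := x * s; have O_y : inO d y := inO_mul O_x (inO_sqrt d).
have P_y : P y by rewrite /y mulrC; exact: (idealMl P_ideal (inO_sqrt d) P_x).
have P_yc : P y^*.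
  rewrite rmorphM /= conj_sqrt_md mulrN -mulNr.
  exact: (idealMl P_ideal (inO_opp (inO_conj O_x)) ideal_sqrt_md).
split.
  by apply: inE_mul O_y.1 _; have := inE_rat d p%:R^-1; rewrite fmorphV rmorph_nat.
apply: Aint_trace_norm.
  rewrite rmorphM fmorphV rmorph_nat -mulrDl.
  apply: ideal_rat_Aint_div; first exact: (idealD P_ideal P_y P_yc).
    exact: inE_trace O_y.1.
  exact: rpredD O_y.2 (inO_conj O_y).2.
have -> : y / p%:R * (y / p%:R)^* = x * x^* / p%:R * k%:R.
  rewrite /y !rmorphM fmorphV rmorph_nat /= conj_sqrt_md.
  have -> : x * s / p%:R * (x^* * - s / p%:R) = - (x * x^*) * s ^+ 2 / p%:R ^+ 2.
    by field.
  by rewrite sqrt_md_sqr dE natrM; field.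
apply: rpredM (rpred_nat _ _); apply: ideal_rat_Aint_div.
- by rewrite mulrC; exact: (idealMl P_ideal (inO_conj O_x) P_x).
- exact: inE_norm O_x.1.
- exact: rpredM O_x.2 (inO_conj O_x).2.
Qed.

Lemma ideal_mul_coord (a b : int) x : P x -> inO d (x * coord d p a b).
Proof.
move=> P_x; have -> : x * coord d p a b = a%:~R * x + b%:~R * (x * s / p%:R).
  by rewrite /coord; ring.
apply: inO_add; apply: inO_mul (inO_int d _) _.
  exact: (ideal_inO P_ideal P_x).
exact: ideal_mul_sqrt_md_div P_x.
Qed.

End RamifiedPrime.

Lemma represented_by_I4_of_coords (d : nat) (P : algC -> Prop) (c : algC)
    (w : 'I_4 -> algC) : c != 0 -> (forall x i, P x -> inO d (x * w i)) ->
  \sum_(i < 4) w i * (w i)^* = c -> represented_by_I4 d P c.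
Proof.
move=> c0 O_w norm_w; exists (fun x i => x * w i); split.
- by move=> x P_x i; apply: O_w.
- by move=> a b x y _ _ _ _ i; rewrite mulrDl !mulrA.
- move=> x y _ _ Exy; apply: (mulIf c0); rewrite -norm_w !mulr_sumr.
  by apply: eq_bigr => i _; rewrite mulrA Exy mulrA.
- move=> x y _ _; rewrite -norm_w mulr_sumr; apply: eq_bigr => i _.
  by rewrite rmorphM /=; ring.
Qed.

Theorem theorem1 (d p r : nat) (P : algC -> Prop) :
  (0 < d)%N -> squarefree d -> class_number_ge d 4 ->
  prime_ideal d P -> ~ principal_ideal d P ->
  prime p -> P (p%:R) -> (p %| d)%N ->
  (0 < r)%N -> ((p - 1) * d <= p * r)%N ->
  represented_by_I4 d P (r%:R / p%:R).
Proof.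
move=> _ d_sqf _ [P_ideal _ P_neq1 P_prime] _ p_prime P_p p_dvd_d r_gt0 r_ge.
have p_gt0 := prime_gt0 p_prime.
have [m dE] := dvdnP p_dvd_d.
have p_m : coprime p m.
  rewrite prime_coprime //; apply: contraNN (d_sqf p p_prime) => p_dvd_m.
  by rewrite dE dvdn_pmul2r.
have [A [B rE]] : exists A B : nat, (p * A + m * B)%N = r.
  by apply: nat_lin_comb_coprime => //; rewrite -(leq_pmul2r p_gt0) -mulnA -dE (mulnC r).
have [a1 [a2 [a3 [a4 AE]]]] := sum4sq_nat A.
have [b1 [b2 [b3 [b4 BE]]]] := sum4sq_nat B.
pose w (i : 'I_4) := coord d p (nth 0 [:: a1; a2; a3; a4] i) (nth 0 [:: b1; b2; b3; b4] i).
apply: (@represented_by_I4_of_coords _ _ _ w).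
- by rewrite mulf_neq0 ?invr_eq0 // pnatr_eq0 -lt0n.
- by move=> x i P_x; apply: (ideal_mul_coord P_ideal P_neq1 P_prime p_prime P_p p_dvd_d).
move/(congr1 (intmul (1 : algC))): AE; rewrite !rmorphD -pmulrn /= => AE.
move/(congr1 (intmul (1 : algC))): BE; rewrite !rmorphD -pmulrn /= => BE.
rewrite !big_ord_recr big_ord0 /= !coord_norm -rE natrD !natrM AE BE dE natrM.
by field; rewrite pnatr_eq0 -lt0n.
Qed.
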